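(* Let $\mathcal{F}=\bigcap_{t=1}^k\mathcal{F}^t$ where for each $t\in[k]$, $\mathcal{F}^t\subseteq[0;B]^I$ is a downward-closed subset of $[0;B]^I$. Suppose each $\mathcal{F}^t$ has a monotone $\alpha_t$-CRS with regards to $q$. Then $\mathcal{F}$ has a monotone $\prod_{t=1}^k\alpha_t$-CRS with regards to $q$.
   Context: Let $I=\{1,\dots,n\}$ be a finite set of items and $[0;B]=\{0,1,\dots,B\}$, $[B]=\{1,\dots,B\}$. For $u,v\in[0;B]^I$, $u\le v$ means $u(i)\le v(i)$ for all $i\in I$. A subset $\mathcal{F}\subseteq[0;B]^I$ is downward-closed if $u\le v\in\mathcal{F}$ implies $u\in\mathcal{F}$. Let $q: I\times[0;B]\to[0,1]$ be a probability distribution (for each $i$, $q(i,\cdot)$ sums to 1), and let $v\in[0;B]^I$ be a random vector where, independently for each $i\in I$, $v(i)=j$ with probability $q(i,j)$. For $\alpha\in[0,1]$, an $\alpha$-contention resolution scheme ($\alpha$-CRS) for a downward-closed $\mathcal{F}$ with regards to $q$ is a (possibly randomized) mapping $\psi:[0;B]^I\to\mathcal{F}$ such that (i) for each $i\in I$, $\psi(v)(i)\in\{0,v(i)\}$, and (ii) for each $i\in I$ and $j\in[B]$, $\Pr[\psi(v)(i)=j\mid v(i)=j]\ge\alpha$, where the probability is over both the random choice of $v$ and the internal randomness of $\psi$. An $\alpha$-CRS $\psi$ is monotone if for all $u,v\in[0;B]^I$ with $u(i)=v(i)$ and $u\le v$, $\Pr[\psi(u)(i)=u(i)]\ge\Pr[\psi(v)(i)=v(i)]$,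 where the probability is only over the internal randomness of $\psi$. *)

From HB Require Import structures.
From mathcomp Require Import all_boot all_order all_algebra.
Set Implicit Arguments. Unset Strict Implicit. Unset Printing Implicit Defensive.
Import Order.TTheory GRing.Theory Num.Theory.
Local Open Scope ring_scope.

(* Items I = 'I_n, values [0;B] = 'I_B.+1; vectors in [0;B]^I. *)
Definition vec (n B : nat) := {ffun 'I_n -> 'I_B.+1}.

Definition leV n B (u v : vec n B) : bool := [forall i, (u i <= v i)%N].

Definition downward_closed n B (F : {set vec n B}) : Prop :=
  forall u v : vec n B, leV u v -> v \in F -> u \in F.

Section CRS.
Variables (R : realFieldType) (n B : nat).

Definition is_dist (q : 'I_n -> 'I_B.+1 -> R) : Prop :=
  (forall i j, 0 <= q i j) /\ (forall i, \sum_j q i j = 1).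

Definition probv (q : 'I_n -> 'I_B.+1 -> R) (v : vec n B) : R :=
  \prod_i q i (v i).

(* A randomized mapping psi is given by its output distribution psi v
   on [0;B]^I for each input v. *)
Definition scheme := vec n B -> {ffun vec n B -> R}.

Definition valid_scheme (F : {set vec n B}) (psi : scheme) : Prop :=
  forall v : vec n B,
    (forall w, 0 <= psi v w) /\ (\sum_w psi v w = 1) /\
    (forall w, psi v w != 0 ->
       w \in F /\ forall i, (w i = 0 :> nat)%N \/ w i = v i).

Definition joint_keep (q : 'I_n -> 'I_B.+1 -> R) (psi : scheme)
    (i : 'I_n) (j : 'I_B.+1) : R :=
  \sum_(v : vec n B) \sum_(w : vec n B)
     (if (v i == j) && (w i == j) then probv q v * psi v w else 0).

Definition prob_val (q : 'I_n -> 'I_B.+1 -> R) (i : 'I_n) (j : 'I_B.+1) : R :=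
  \sum_(v : vec n B | v i == j) probv q v.

(* alpha-CRS: conditional probability Pr[psi(v)(i)=j | v(i)=j] >= alpha,
   required whenever the conditioning event has positive probability. *)
Definition is_CRS (q : 'I_n -> 'I_B.+1 -> R) (F : {set vec n B})
    (alpha : R) (psi : scheme) : Prop :=
  0 <= alpha <= 1 /\ valid_scheme F psi /\
  forall (i : 'I_n) (j : 'I_B.+1), (0 < j)%N -> 0 < prob_val q i j ->
    alpha <= joint_keep q psi i j / prob_val q i j.

Definition keep_prob (psi : scheme) (v : vec n B) (i : 'I_n) : R :=
  \sum_(w : vec n B | w i == v i) psi v w.

Definition monotone_scheme (psi : scheme) : Prop :=
  forall (u v : vec n B) (i : 'I_n), u i = v i -> leV u v ->
    keep_prob psi v i <= keep_prob psi u i.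

Definition has_monotone_CRS (q : 'I_n -> 'I_B.+1 -> R) (F : {set vec n B})
    (alpha : R) : Prop :=
  exists psi : scheme, is_CRS q F alpha psi /\ monotone_scheme psi.

End CRS.

(* Run the [k] schemes independently on [v] and keep item [i] only if every
   run keeps it.  The outcome lies in every [F t] since these are downward
   closed, and the probability of keeping [i] is the product of the individual
   keep probabilities, so monotonicity is inherited.  Conditioned on
   [v i = j], each individual keep probability is an antitone function of the
   other, independent coordinates, so by the Harris inequality the expectation
   of their product is at least the product of their expectations, which is
   at least [\prod_t alpha t]. *)

From HB Require Import structures.
From mathcomp Require Import all_boot all_order all_algebra.
From mathcomp Require Import ring lra.
From Stdlib Require Import IndefiniteDescription.
Import Order.TTheory GRing.Theory Num.Theory.
Local Open Scope ring_scope.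

Lemma chebyshev_sum (R : realFieldType) (T : finType) (p F G : T -> R) :
  (forall a, 0 <= p a) -> (forall a b, 0 <= (F a - F b) * (G a - G b)) ->
  (\sum_a p a * F a) * (\sum_a p a * G a) <= (\sum_a p a) * \sum_a p a * (F a * G a).
Proof.
move=> p_ge0 FG_ge0.
set S := \sum_a p a; set X := \sum_a p a * (F a * G a).
set Y := (\sum_a p a * F a) * (\sum_a p a * G a).
have expand a b : p a * p b * ((F a - F b) * (G a - G b)) =
    p a * (F a * G a) * p b + p b * (F b * G b) * p a
    - (p a * F a * (p b * G b) + p b * F b * (p a * G a)) by ring.
have : 0 <= \sum_a \sum_b p a * p b * ((F a - F b) * (G a - G b)).
  apply: sumr_ge0 => a _; apply: sumr_ge0 => b _.
  exact: mulr_ge0 (mulr_ge0 (p_ge0 a) (p_ge0 b)) (FG_ge0 a b).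
under eq_bigr do under eq_bigr do rewrite expand.
under eq_bigr do rewrite sumrB !big_split /=.
rewrite sumrB !big_split /= [X in _ + X - _]exchange_big.
rewrite [X in _ - (_ + X)]exchange_big /= -!big_distrlr /= -/X -/Y.
by rewrite -/S mulrC => ?; lra.
Qed.

Lemma sum_natr_eq {R : pzSemiRingType} {T : finType} (P : pred T) (c : T) :
  \sum_(x | P x) (x == c)%:R = (P c)%:R :> R.
Proof.
rewrite big_mkcond (bigD1 c) //= eqxx big1 ?addr0; first by case: (P c).
by move=> x /negbTE ->; case: (P x).
Qed.

Section ProductSpace.
#[local] Set Implicit Arguments.
#[local] Unset Strict Implicit.
Variables (R : realFieldType) (n B : nat).
Implicit Types (q : 'I_n -> 'I_B.+1 -> R) (u v : vec n B) (h : vec n B -> R).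

Definition expect q h : R := \sum_v probv q v * h v.

Definition antitone h := forall u v, leV u v -> h v <= h u.

Definition upd v (m : 'I_n) (a : 'I_B.+1) : vec n B :=
  [ffun i => if i == m then a else v i].

Lemma upd_same v m a : upd v m a m = a.
Proof. by rewrite ffunE eqxx. Qed.

Lemma updK v m a : upd (upd v m a) m (v m) = v.
Proof. by apply/ffunP => i; rewrite !ffunE; case: eqP => // ->. Qed.

Lemma leV_upd u v m (a b : 'I_B.+1) :
  leV u v -> (a <= b)%N -> leV (upd u m a) (upd v m b).
Proof.
move=> /forallP le_uv le_ab; apply/forallP => i; rewrite !ffunE.
by case: (i == m) => //; apply: le_uv.
Qed.

Lemma antitone_upd h m a : antitone h -> antitone (fun v => h (upd v m a)).
Proof. by move=> h_anti u v le_uv; apply/h_anti/leV_upd. Qed.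

Section Expectation.
Variable q : 'I_n -> 'I_B.+1 -> R.
Hypothesis q_dist : is_dist q.
Let q_ge0 i a : 0 <= q i a := proj1 q_dist i a.
Let q_sum1 i : \sum_a q i a = 1 := proj2 q_dist i.

Lemma probv_ge0 v : 0 <= probv q v.
Proof. by apply: prodr_ge0 => i _; apply: q_ge0. Qed.

Lemma sum_probv : \sum_v probv q v = 1.
Proof. by rewrite /probv -bigA_distr_bigA /= big1 // => i _; apply: q_sum1. Qed.

Lemma expect_cst c : expect q (fun _ => c) = c.
Proof. by rewrite /expect -mulr_suml sum_probv mul1r. Qed.

Lemma expect_resample m h :
  expect q h = \sum_a q m a * expect q (fun v => h (upd v m a)).
Proof.
pose r v := \prod_(i | i != m) q i (v i).
have probvE v : probv q v = q m (v m) * r v by rewrite /probv (bigD1 m).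
have r_upd v a : r (upd v m a) = r v.
  by apply: eq_bigr => i /negbTE im; rewrite ffunE im.
pose G (p : vec n B * 'I_B.+1) := q m p.2 * (q m (p.1 m) * r p.1 * h p.1).
pose s (p : vec n B * 'I_B.+1) := (upd p.1 m p.2, p.1 m).
have sK : involutive s by case=> v a; rewrite /s /= updK upd_same.
have -> : expect q h = \sum_p G p.
  rewrite -(pair_bigA _ (fun v b => G (v, b))) /G /expect /=.
  by apply: eq_bigr => v _; rewrite -mulr_suml q_sum1 mul1r probvE.
rewrite (reindex_inj (inv_inj sK)) /=.
rewrite -(pair_bigA _ (fun v b => G (s (v, b)))) /= exchange_big /=.
apply: eq_bigr => a _; rewrite /expect mulr_sumr; apply: eq_bigr => v _.
by rewrite /G /s /= upd_same r_upd probvE; ring.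
Qed.

Lemma expect_upd_antitone m h (a b : 'I_B.+1) : antitone h -> (a <= b)%N ->
  expect q (fun v => h (upd v m b)) <= expect q (fun v => h (upd v m a)).
Proof.
move=> h_anti le_ab; apply: ler_sum => v _; rewrite ler_wpM2l ?probv_ge0 //.
by apply/h_anti/leV_upd => //; apply/forallP.
Qed.

Definition depends_on_first (m : nat) h :=
  forall u v, (forall i : 'I_n, (i < m)%N -> u i = v i) -> h u = h v.

Lemma depends_on_first_upd (m : nat) (lt_mn : (m < n)%N) h a :
  depends_on_first m.+1 h -> depends_on_first m (fun v => h (upd v (Ordinal lt_mn) a)).
Proof.
move=> h_dep u v eq_uv; apply: h_dep => i lt_im; rewrite !ffunE.
case: eqP => // /eqP ne_im; apply: eq_uv.
rewrite ltn_neqAle -ltnS lt_im andbT.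
by apply: contra ne_im => /eqP eq_im; apply/eqP/val_inj.
Qed.

(* Harris inequality, by induction on the number of coordinates the
   functions may depend on: resampling the last of them splits both sides
   into averages over its value, which Chebyshev's sum inequality compares. *)
Lemma harris f g : antitone f -> antitone g ->
  expect q f * expect q g <= expect q (fun v => f v * g v).
Proof.
suff harris_first m : forall f g, antitone f -> antitone g ->
    depends_on_first m f -> depends_on_first m g ->
    expect q f * expect q g <= expect q (fun v => f v * g v).
  move=> f_anti g_anti; apply: (harris_first n) => // u v eq_uv;
    by congr (_ _); apply/ffunP => i; apply: eq_uv.
elim: m => [|m IHm] {}f {}g f_anti g_anti f_dep g_dep.
  pose v0 : vec n B := [ffun => ord0].
  have cst h : depends_on_first 0 h -> expect q h = h v0.
    move=> h_dep; rewrite -[RHS]expect_cst.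
    by apply: eq_bigr => v _; rewrite (h_dep v v0).
  by rewrite !cst // => u v _; rewrite (f_dep u v) // (g_dep u v).
have [lt_mn|le_nm] := ltnP m n; last first.
  by apply: IHm => // u v eq_uv; [apply: f_dep|apply: g_dep] => i _;
    apply: eq_uv; apply: leq_trans (ltn_ord i) le_nm.
pose mm := Ordinal lt_mn.
rewrite (expect_resample mm f) (expect_resample mm g) (expect_resample mm).
apply: le_trans (_ : \sum_a q mm a * (expect q (fun v => f (upd v mm a)) *
                                     expect q (fun v => g (upd v mm a))) <= _).
  rewrite -[X in _ <= X]mul1r -(q_sum1 mm); apply: chebyshev_sum; first exact: q_ge0.
  move=> a b; have [le_ab|/ltnW le_ba] := leqP a b.
    by rewrite mulr_ge0 // subr_ge0 expect_upd_antitone.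
  by rewrite mulr_le0 // subr_le0 expect_upd_antitone.
apply: ler_sum => a _; rewrite ler_wpM2l ?q_ge0 //.
by apply: IHm; [apply: antitone_upd | apply: antitone_upd |
                apply: depends_on_first_upd | apply: depends_on_first_upd].
Qed.

Lemma harris_prod k (f : 'I_k -> vec n B -> R) :
  (forall t, antitone (f t)) -> (forall t v, 0 <= f t v) ->
  \prod_t expect q (f t) <= expect q (fun v => \prod_t f t v).
Proof.
elim: k f => [|k IHk] f f_anti f_ge0.
  by rewrite big_ord0 -[X in X <= _]expect_cst; apply: ler_sum => v _; rewrite big_ord0.
have prod_anti : antitone (fun v => \prod_(t < k) f (widen_ord (leqnSn k) t) v).
  by move=> u v le_uv; apply: ler_prod => t _; rewrite f_ge0 f_anti.
have -> : expect q (fun v => \prod_t f t v) =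
    expect q (fun v => (\prod_(t < k) f (widen_ord (leqnSn k) t) v) * f ord_max v).
  by apply: eq_bigr => v _; rewrite big_ord_recr.
rewrite big_ord_recr /=; apply: le_trans _ (harris prod_anti (f_anti ord_max)).
apply: ler_wpM2r; last by apply: IHk => [t|t v]; [apply: f_anti|apply: f_ge0].
by apply: sumr_ge0 => v _; rewrite mulr_ge0 ?probv_ge0 ?f_ge0.
Qed.

End Expectation.

Definition cond_dist q (i : 'I_n) (j : 'I_B.+1) : 'I_n -> 'I_B.+1 -> R :=
  fun i' a => if i' == i then (a == j)%:R else q i' a.

Lemma cond_dist_is_dist q i j : is_dist q -> is_dist (cond_dist q i j).
Proof.
move=> [q_ge0 q_sum1]; split=> [i' a|i']; rewrite /cond_dist; case: eqP => _ //.
by rewrite (bigD1 j) //= eqxx big1 ?addr0 // => a /negbTE ->.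
Qed.

Lemma probv_cond_dist q i j v :
  (v i == j)%:R * probv q v = q i j * probv (cond_dist q i j) v.
Proof.
rewrite /probv (bigD1 i) //= [in RHS](bigD1 i) //=.
rewrite [X in _ = _ * (_ * X)](eq_bigr (fun i' => q i' (v i'))); last first.
  by move=> i' /negbTE ne; rewrite /cond_dist ne.
by rewrite /cond_dist eqxx; case: eqP => [->|_]; rewrite ?mul1r ?mul0r ?mulr0.
Qed.

Lemma prob_valE q i j : is_dist q -> prob_val q i j = q i j.
Proof.
move=> q_dist; rewrite /prob_val big_mkcond /=.
rewrite (eq_bigr (fun v => q i j * probv (cond_dist q i j) v)); last first.
  by move=> v _; rewrite -probv_cond_dist; case: (v i == j); rewrite ?mul1r ?mul0r.
by rewrite -mulr_sumr sum_probv ?mulr1 //; apply: cond_dist_is_dist.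
Qed.

Definition cond_keep q (psi : scheme R n B) i j : R :=
  expect (cond_dist q i j) (fun v => keep_prob psi (upd v i j) i).

Lemma joint_keepE q (psi : scheme R n B) i j :
  joint_keep q psi i j = q i j * cond_keep q psi i j.
Proof.
rewrite /joint_keep /cond_keep /expect mulr_sumr; apply: eq_bigr => v _.
rewrite mulrA -probv_cond_dist; case: eqP => [vij|_] /=; last first.
  by rewrite mulr0n !mul0r; apply: big1.
have -> : upd v i j = v by apply/ffunP => x; rewrite ffunE; case: eqP => // ->.
by rewrite mulr1n mul1r /keep_prob mulr_sumr [RHS]big_mkcond vij.
Qed.

Lemma is_CRSE q (F : {set vec n B}) alpha psi : is_dist q ->
  is_CRS q F alpha psi <-> [/\ 0 <= alpha <= 1, valid_scheme F psi &
    forall i (j : 'I_B.+1), (0 < j)%N -> 0 < q i j -> alpha <= cond_keep q psi i j].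
Proof.
move=> q_dist; rewrite /is_CRS.
have ratioE i j : 0 < q i j -> joint_keep q psi i j / prob_val q i j = cond_keep q psi i j.
  by move=> q_gt0; rewrite prob_valE // joint_keepE mulrC mulKf ?gt_eqF.
split=> [[alpha01 [psi_valid psi_keep]]|[alpha01 psi_valid psi_keep]].
  by split=> // i j j_gt0 q_gt0; rewrite -ratioE //; apply: psi_keep; rewrite ?prob_valE.
split=> //; split=> // i j j_gt0; rewrite [X in 0 < X]prob_valE // => q_gt0.
by rewrite ratioE ?psi_keep.
Qed.

Lemma keep_probE (psi : scheme R n B) v i :
  keep_prob psi v i = \sum_w psi v w * (w i == v i)%:R.
Proof.
by rewrite /keep_prob big_mkcond; apply: eq_bigr => w _; case: ifP; rewrite ?mulr1 ?mulr0.
Qed.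

Lemma keep_prob_ge0 (F : {set vec n B}) (psi : scheme R n B) v i :
  valid_scheme F psi -> 0 <= keep_prob psi v i.
Proof. by move=> psi_valid; apply: sumr_ge0 => w _; apply: (psi_valid v).1. Qed.

Section MeetScheme.
Variables (k : nat) (F : 'I_k -> {set vec n B}) (psis : 'I_k -> scheme R n B).
Hypothesis psis_valid : forall t, valid_scheme (F t) (psis t).

(* [W] records the outcomes of independent runs of the [k] schemes on [v]. *)
Definition meet_outcome v (W : {ffun 'I_k -> vec n B}) : vec n B :=
  [ffun i => if [forall t, W t i == v i] then v i else ord0].

Definition meet_scheme : scheme R n B :=
  fun v => [ffun w => \sum_(W : {ffun 'I_k -> vec n B})
                        (\prod_t psis t v (W t)) * (w == meet_outcome v W)%:R].

Lemma meet_scheme_ge0 v w : 0 <= meet_scheme v w.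
Proof.
rewrite ffunE; apply: sumr_ge0 => W _; rewrite mulr_ge0 // prodr_ge0 // => t _.
exact: (psis_valid t v).1.
Qed.

Lemma meet_scheme_sum1 v : \sum_w meet_scheme v w = 1.
Proof.
under eq_bigr do rewrite ffunE.
rewrite exchange_big /=.
under eq_bigr do rewrite -mulr_sumr (sum_natr_eq xpredT) mulr1.
rewrite -(bigA_distr_bigA (fun t w => psis t v w)) /=.
by apply: big1 => t _; apply: (psis_valid t v).2.1.
Qed.

Lemma meet_runs_support v (W : {ffun 'I_k -> vec n B}) :
  \prod_t psis t v (W t) != 0 -> forall t,
  W t \in F t /\ forall i, (W t i = 0 :> nat) \/ W t i = v i.
Proof.
move=> prod_neq0 t; apply: (psis_valid t v).2.2; apply: contraNneq prod_neq0 => psi0.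
by rewrite (bigD1 t) //= psi0 mul0r.
Qed.

Lemma meet_outcome_kept v (W : {ffun 'I_k -> vec n B}) i :
  (forall t, (W t i = 0 :> nat) \/ W t i = v i) ->
  (meet_outcome v W i == v i) = [forall t, W t i == v i].
Proof.
move=> W_supp; rewrite ffunE; case: ifP => [_|/negbT]; first by rewrite eqxx.
case/forallPn=> t /negbTE not_kept; apply: contraFF not_kept => /eqP outcome0.
by case: (W_supp t) => [Wti0|->//]; apply/eqP/val_inj; rewrite /= Wti0 -outcome0.
Qed.

Lemma keep_prob_meet_scheme v i :
  keep_prob meet_scheme v i = \prod_t keep_prob (psis t) v i.
Proof.
under [RHS]eq_bigr do rewrite keep_probE.
rewrite bigA_distr_bigA /= /keep_prob /meet_scheme.
under [LHS]eq_bigr do rewrite ffunE.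
rewrite exchange_big /=; apply: eq_bigr => W _.
rewrite -mulr_sumr (sum_natr_eq (fun w : vec n B => w i == v i)) big_split /=.
have [->|prod_neq0] := eqVneq (\prod_t psis t v (W t)) 0; first by rewrite !mul0r.
rewrite meet_outcome_kept => [|t]; last exact: (meet_runs_support prod_neq0 t).2.
congr (_ * _).
have [/forallP all_kept|/forallPn [t not_kept]] := boolP [forall t, W t i == v i].
  by rewrite big1 // => t _; rewrite all_kept.
by rewrite (bigD1 t) //= (negbTE not_kept) mul0r.
Qed.

Lemma meet_scheme_valid :
  (forall t, downward_closed (F t)) -> valid_scheme (\bigcap_t F t) meet_scheme.
Proof.
move=> F_down v; split; [exact: meet_scheme_ge0 | split; first exact: meet_scheme_sum1].
move=> w; rewrite ffunE => sum_neq0.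
have [W term_neq0] : exists W : {ffun 'I_k -> vec n B},
    (\prod_t psis t v (W t)) * (w == meet_outcome v W)%:R != 0.
  apply/existsP; apply: contraNT sum_neq0; rewrite negb_exists => /forallP term0.
  by apply/eqP/big1 => W _; apply/eqP/negbNE; apply: term0.
have prod_neq0 : \prod_t psis t v (W t) != 0.
  by apply: contraNneq term_neq0 => ->; rewrite mul0r.
have {term_neq0}-> : w = meet_outcome v W.
  by apply/eqP; apply: contraNT term_neq0 => /negbTE ->; rewrite mulr0.
split=> [|i]; last by rewrite ffunE; case: ifP; [right|left].
apply/bigcapP => t _; have [W_F _] := meet_runs_support prod_neq0 t.
apply: F_down W_F; apply/forallP => i; rewrite ffunE.
by case: ifP => [/forallP all_kept|//]; rewrite (eqP (all_kept t)).
Qed.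

Hypothesis psis_mono : forall t, monotone_scheme (psis t).

Lemma meet_scheme_monotone : monotone_scheme meet_scheme.
Proof.
move=> u v i uv_i le_uv; rewrite !keep_prob_meet_scheme; apply: ler_prod => t _.
by rewrite (keep_prob_ge0 _ _ (psis_valid t)) psis_mono.
Qed.

Lemma cond_keep_meet_scheme q i j : is_dist q ->
  \prod_t cond_keep q (psis t) i j <= cond_keep q meet_scheme i j.
Proof.
move=> q_dist; rewrite /cond_keep.
under [X in _ <= X]eq_bigr do rewrite keep_prob_meet_scheme.
apply: (harris_prod (cond_dist_is_dist i j q_dist)) => [t u v le_uv|t v].
  by apply: psis_mono; rewrite ?upd_same ?leV_upd.
exact: keep_prob_ge0 (psis_valid t).
Qed.

Lemma meet_scheme_is_CRS q (alpha : 'I_k -> R) : is_dist q ->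
  (forall t, downward_closed (F t)) -> (forall t, is_CRS q (F t) (alpha t) (psis t)) ->
  is_CRS q (\bigcap_t F t) (\prod_t alpha t) meet_scheme.
Proof.
move=> q_dist F_down psis_CRS; apply/is_CRSE => //.
have {}psis_CRS t := (is_CRSE _ _ _ q_dist).1 (psis_CRS t).
split; [apply/andP; split | exact: meet_scheme_valid | move=> i j j_gt0 q_gt0].
- by apply: prodr_ge0 => t _; case: (psis_CRS t) => /andP[].
- by apply: prodr_ile1 => t _; case: (psis_CRS t).
apply: le_trans (cond_keep_meet_scheme i j q_dist).
apply: ler_prod => t _; case: (psis_CRS t) => /andP[alpha_ge0 _] _ keep_bound.
by rewrite alpha_ge0 keep_bound.
Qed.

End MeetScheme.
End ProductSpace.

Theorem lemma2 (R : realFieldType) (n B k : nat)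
    (q : 'I_n -> 'I_B.+1 -> R) (F : 'I_k -> {set vec n B}) (alpha : 'I_k -> R) :
  is_dist q ->
  (forall t, downward_closed (F t)) ->
  (forall t, has_monotone_CRS q (F t) (alpha t)) ->
  has_monotone_CRS q (\bigcap_(t < k) F t) (\prod_(t < k) alpha t).
Proof.
move=> q_dist F_down F_CRS.
have [psis psis_CRS] := functional_choice
  (fun t psi => is_CRS q (F t) (alpha t) psi /\ monotone_scheme psi) F_CRS.
have psis_valid t : valid_scheme (F t) (psis t) by case: (psis_CRS t) => [[_ []]].
exists (meet_scheme psis); split.
  by apply: meet_scheme_is_CRS => // t; case: (psis_CRS t).
by apply: meet_scheme_monotone => // t; case: (psis_CRS t).
Qed.
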